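(* Let $G$ be a context-free grammar, $k\ge 0$, and let $N$ be its canonical LR($k$) NFA. Let $v_1=(\hat\Pi_1,\lambda_1)$ and $v_2=(\hat\Pi_2,\lambda_2)$ be vertices of $N$ that are both reachable from the starting vertex on the same string $\zeta\in(\Lambda\cup\Sigma)^*$ and that have conflicting actions on some lookahead $\mu\in\Gamma^k$. Then for every $\lambda_1'\in\mathcal U(\hat\Pi_1)$ with $\lambda_1'\equiv_{\hat\Pi_1}\lambda_1$ and every $\lambda_2'\in\mathcal U(\hat\Pi_2)$ with $\lambda_2'\equiv_{\hat\Pi_2}\lambda_2$, the vertices $(\hat\Pi_1,\lambda_1')$ and $(\hat\Pi_2,\lambda_2')$ have conflicting actions on $\mu$.
   Context: $G$ has finite nonterminal set $\Lambda$, terminal set $\Sigma$, $\Gamma=\Sigma\cup\{\dashv\}$ with $\dashv$ an end marker, and start symbol $S$ which appears on the left of exactly one production $S\to\eta$ and on no right-hand side. For $T\subseteq(\Lambda\cup\Gamma)^*$, $\mathrm{Gen}(T)$ is the set of $y\in\Gamma^*$ with $x\Rightarrow^*y$ for some $x\in T$, and $\mathrm{First}_k(T)=\{x_1\cdots x_{\min(k,r)}: x_1\cdots x_r\in T\}$; concatenations involving sets are taken elementwise. A dotted production is $X\to\alpha\cdot\beta$ where $X\to\alpha\beta$ is a production. Forward-reachable $k$-follow strings: the least assignment of subsets of $\Gamma^k$ to productions such that $\dashv^k$ is assigned to $S\to\eta$, and whenever $\lambda$ is assigned to $X\to\alpha Y\beta$ then every $\mu\in\mathrm{First}_k(\mathrm{Gen}(\beta\lambda))$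 is assigned to every production $Y\to\gamma$. For a dotted production $\hat\Pi$ with underlying production $\Pi$, $\mathcal U(\hat\Pi)$ is the set assigned to $\Pi$. Canonical LR($k$) NFA: vertices $(\hat\Pi,\lambda)$ with $\lambda\in\mathcal U(\hat\Pi)$; starting vertex $(S\to\cdot\,\eta,\dashv^k)$; $\varepsilon$-edges from $(X\to\alpha\cdot Y\beta,\lambda)$ to $(Y\to\cdot\,\gamma,\mu)$ whenever $\mu\in\mathrm{First}_k(\mathrm{Gen}(\beta\lambda))$; edges labeled $\tau\in\Lambda\cup\Sigma$ from $(X\to\alpha\cdot\tau\beta,\lambda)$ to $(X\to\alpha\tau\cdot\beta,\lambda)$. Actions: vertex $(X\to\alpha\,\cdot,\lambda)$ has action ``Reduce $X\to\alpha$'' on lookahead $\lambda$; vertex $(X\to\alpha\cdot\sigma\beta,\lambda)$ with $\sigma\in\Sigma$ has action ``Shift'' on each lookahead $\mu\in\mathrm{First}_k(\mathrm{Gen}(\sigma\beta\lambda))$; there are no other actions. Two vertices have conflicting actions on $\mu$ if they have distinct actions on $\mu$. A vertex is reachable on a string $\zeta\in(\Lambda\cup\Sigma)^*$ if there is a path of edges from the starting vertex whose labels, with $\varepsilon$'s deleted, concatenate to $\zeta$. The LR($0$) NFA is the case $k=0$ (vertices are effectively the dotted productions). A lookahead $\mu\in\Gamma^k$ is $\hat\Pi$-compatible with $\lambda\in\Gamma^k$, for $\hat\Pi=X\to\alpha\cdot\beta$, if $\mu\in\mathrm{First}_k(\mathrm{Gen}(\beta\lambda))$. A lookahead $\mu$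 is potentially-conflicting for $\hat\Pi$ if there exist a dotted production $\hat\Pi'$ and $\lambda\in\mathcal U(\hat\Pi)$, $\lambda'\in\mathcal U(\hat\Pi')$ such that the LR($0$) NFA vertices for $\hat\Pi$ and $\hat\Pi'$ are reachable on a common string $\zeta\in(\Sigma\cup\Lambda)^*$ in the LR($0$) NFA, and $(\hat\Pi,\lambda)$, $(\hat\Pi',\lambda')$ have conflicting actions on $\mu$ in the canonical LR($k$) NFA. For $\lambda,\lambda'\in\Gamma^k$, $\lambda\equiv_{\hat\Pi}\lambda'$ iff for every potentially-conflicting lookahead $\mu$ for $\hat\Pi$, $\mu$ is $\hat\Pi$-compatible with $\lambda$ iff it is $\hat\Pi$-compatible with $\lambda'$. *)

From mathcomp Require Import all_boot.
From Stdlib Require Import List Relations.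
Set Implicit Arguments. Unset Strict Implicit. Unset Printing Implicit Defensive.

(* Gamma = Sigma + {end marker} *)
Inductive gamma (Sigma : Type) := GT of Sigma | GEnd.
Arguments GEnd {Sigma}.

Record grammar (Lam : finType) (Sigma : Type) := Grammar {
  prods : list (Lam * list (Lam + Sigma));
  start : Lam;
  start_one : exists eta, List.In (start, eta) prods /\
                forall g, List.In (start, g) prods -> g = eta;
  start_not_rhs : forall X g, List.In (X, g) prods -> ~ List.In (inl start) g
}.

Section LR.
Variables (Lam : finType) (Sigma : Type) (G : grammar Lam Sigma).

Definition sym := (Lam + Sigma)%type.
Definition production := (Lam * list sym)%type.
(* symbols of sentential forms over Lam u Gamma *)
Definition ssym := (Lam + gamma Sigma)%type.

Definition emb (s : sym) : ssym :=
  match s with inl X => inl X | inr a => inr (GT a) end.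

Definition step (x y : list ssym) : Prop :=
  exists u w X g, List.In (X, g) (prods G) /\
    x = u ++ inl X :: w /\ y = u ++ map emb g ++ w.

Definition Gen (T : list ssym -> Prop) (y : list (gamma Sigma)) : Prop :=
  exists x, T x /\ clos_refl_trans _ step x (map inr y).

Definition Firstk (k : nat) (T : list (gamma Sigma) -> Prop)
  (mu : list (gamma Sigma)) : Prop :=
  exists x, T x /\ mu = take k x.

Definition follow (k : nat) (beta : list sym) (lam mu : list (gamma Sigma)) :=
  Firstk k (Gen (fun x => x = map emb beta ++ map inr lam)) mu.

Inductive U (k : nat) : production -> list (gamma Sigma) -> Prop :=
| U_start eta : List.In (start G, eta) (prods G) ->
    U k (start G, eta) (nseq k GEnd)
| U_step X alpha Y beta lam g mu :
    List.In (X, alpha ++ inl Y :: beta) (prods G) ->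
    U k (X, alpha ++ inl Y :: beta) lam ->
    List.In (Y, g) (prods G) ->
    follow k beta lam mu ->
    U k (Y, g) mu.

(* dotted production X -> alpha . beta  is (X, alpha, beta) *)
Definition dotted := (Lam * list sym * list sym)%type.
Definition under (d : dotted) : production := (d.1.1, d.1.2 ++ d.2).
Definition is_dotted (d : dotted) := List.In (under d) (prods G).

Definition vertex := (dotted * list (gamma Sigma))%type.
Definition is_vertex (k : nat) (v : vertex) :=
  is_dotted v.1 /\ U k (under v.1) v.2.

Definition eps_edge (k : nat) (v w : vertex) : Prop :=
  is_vertex k v /\ is_vertex k w /\
  exists X alpha Y beta lam g mu,
    v = ((X, alpha, inl Y :: beta), lam) /\ w = ((Y, [::], g), mu) /\
    follow k beta lam mu.

Definition sym_edge (k : nat) (v : vertex) (tau : sym) (w : vertex) : Prop :=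
  is_vertex k v /\ is_vertex k w /\
  exists X alpha beta lam,
    v = ((X, alpha, tau :: beta), lam) /\ w = ((X, alpha ++ [:: tau], beta), lam).

Inductive reach (k : nat) : vertex -> list sym -> Prop :=
| reach_start eta : List.In (start G, eta) (prods G) ->
    reach k ((start G, [::], eta), nseq k GEnd) [::]
| reach_eps v w zeta : reach k v zeta -> eps_edge k v w -> reach k w zeta
| reach_sym v tau w zeta : reach k v zeta -> sym_edge k v tau w ->
    reach k w (zeta ++ [:: tau]).

Inductive action := Reduce of production | Shift.

Definition has_action (k : nat) (v : vertex) (mu : list (gamma Sigma))
  (a : action) : Prop :=
  is_vertex k v /\
  ((exists X alpha lam, v = ((X, alpha, [::]), lam) /\ mu = lam /\
       a = Reduce (X, alpha)) \/
   (exists X alpha s beta lam, v = ((X, alpha, inr s :: beta), lam) /\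
       follow k (inr s :: beta) lam mu /\ a = Shift)).

Definition conflicting (k : nat) (v1 v2 : vertex) (mu : list (gamma Sigma)) :=
  exists a1 a2, has_action k v1 mu a1 /\ has_action k v2 mu a2 /\ a1 <> a2.

Definition compatible (k : nat) (d : dotted) (mu lam : list (gamma Sigma)) :=
  follow k d.2 lam mu.

(* potentially-conflicting lookahead (reachability in the LR(0) NFA, k = 0) *)
Definition pot_conflicting (k : nat) (d : dotted) (mu : list (gamma Sigma)) :=
  size mu = k /\
  exists d' lam lam' zeta,
    U k (under d) lam /\ U k (under d') lam' /\
    reach 0 (d, nseq 0 GEnd) zeta /\ reach 0 (d', nseq 0 GEnd) zeta /\
    conflicting k (d, lam) (d', lam') mu.

Definition lequiv (k : nat) (d : dotted) (lam lam' : list (gamma Sigma)) :=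
  forall mu, pot_conflicting k d mu ->
    (compatible k d mu lam <-> compatible k d mu lam').

End LR.

(* A vertex (Pi, lam) of the canonical LR(k) NFA acts on mu only if mu is
   Pi-compatible with lam: a reduce on mu forces mu = lam, and lam is a
   terminal string of length k, so First_k(Gen(lam)) = {lam}; a shift is
   compatibility by definition.  Conversely, if mu is also Pi-compatible
   with some lam' in U(Pi), then (Pi, lam') has the same action on mu.
   Projecting the two reach paths to k = 0 shows that a conflict on mu at
   vertices reachable on a common string makes mu potentially-conflicting for
   both dotted productions, so equivalent lookaheads agree on compatibility
   with mu and the conflict persists. *)

From mathcomp Require Import all_boot.
From Stdlib Require Import List Relations.

Set Implicit Arguments.
Unset Strict Implicit.
Unset Printing Implicit Defensive.
Local Open Scope list_scope.

Section LRConflicts.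
Variables (Lam : finType) (Sigma : Type) (G : grammar Lam Sigma).

Local Notation derives := (clos_refl_trans _ (step G)).
Local Notation emb := (@emb Lam Sigma).

Lemma map_inr_inj (a b : list (gamma Sigma)) :
  map (@inr Lam (gamma Sigma)) a = map inr b -> a = b.
Proof. by elim: a b => [|c a IH] [|d b] //= [-> /IH ->]. Qed.

Lemma step_app_inv (a b y : list (ssym Lam Sigma)) : step G (a ++ b) y ->
  (exists a', y = a' ++ b /\ step G a a') \/
  (exists b', y = a ++ b' /\ step G b b').
Proof.
move=> [u [w [X [g [Xg [Eab ->]]]]]].
have [l [[-> El]|[-> Eb]]] := app_eq_app _ _ _ _ Eab.
- case: l El => [|c l] /= El.
  + right; rewrite -El app_nil_r; exists (map emb g ++ w).
    by split; last exists [::], w, X, g.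
  + left; case: El => <- ->; exists (u ++ map emb g ++ l).
    by split; [rewrite -!app_assoc | exists u, l, X, g].
- right; exists (l ++ map emb g ++ w).
  by split; [rewrite app_assoc | exists l, w, X, g].
Qed.

Lemma derives_app_inv (a b z : list (ssym Lam Sigma)) : derives (a ++ b) z ->
  exists z1 z2, z = z1 ++ z2 /\ derives a z1 /\ derives b z2.
Proof.
move=> /clos_rt_rt1n_iff D; remember (a ++ b) as x eqn:Ex.
elim: D a b Ex => [x0|x0 y z0 st _ IH] a b Ex.
  by exists a, b; subst; split=> //; split; apply: rt_refl.
subst; have [[a' [Ey st_a]]|[b' [Ey st_b]]] := step_app_inv st.
- have [z1 [z2 [-> [Da Db]]]] := IH _ _ Ey.
  by exists z1, z2; do 2 split=> //; apply: rt_trans (rt_step _ _ _ _ st_a) Da.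
- have [z1 [z2 [-> [Da Db]]]] := IH _ _ Ey.
  by exists z1, z2; do 2 split=> //; apply: rt_trans (rt_step _ _ _ _ st_b) Db.
Qed.

Lemma derives_terminal (t : list (gamma Sigma)) (c : list (ssym Lam Sigma)) :
  derives (map inr t) c -> c = map inr t.
Proof.
move=> /clos_rt_rt1n_iff [//|y z [u [w [X [g [_ [Et _]]]]]] _].
have [t1 [t2 [_ [_ Et2]]]] := map_eq_app _ _ _ _ Et.
by case: t2 Et2.
Qed.

Lemma followP k beta lam mu : follow G k beta lam mu ->
  exists y, derives (map emb beta) (map inr y) /\ mu = take k (y ++ lam).
Proof.
move=> [x [[_ [-> Dx]] ->]].
have [z1 [z2 [Ex [D1 D2]]]] := derives_app_inv Dx.
move: Ex; rewrite (derives_terminal D2) => Ex.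
have [y1 [y2 [-> [Ey1 Ey2]]]] := map_eq_app _ _ _ _ Ex.
by exists y1; rewrite Ey1 (map_inr_inj Ey2).
Qed.

Lemma follow_size k beta lam mu :
  follow G k beta lam mu -> size lam = k -> size mu = k.
Proof.
move=> /followP [y [_ ->]] <-.
by rewrite size_takel // -/(cat y lam) size_cat leq_addl.
Qed.

Lemma follow_lr0 k beta lam mu :
  follow G k beta lam mu -> follow G 0 beta [::] [::].
Proof.
move=> /followP [y [Dy _]].
exists y; split; last by rewrite take0.
by exists (map emb beta); rewrite /= app_nil_r.
Qed.

Lemma follow_nil k lam : size lam = k -> follow G k [::] lam lam.
Proof.
by move=> Hk; exists lam; split; [exists (map inr lam); split; last apply: rt_refl
                                 | rewrite take_oversize // Hk].
Qed.

Lemma follow_nilE k lam mu :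
  follow G k [::] lam mu -> size lam = k -> mu = lam.
Proof.
move=> /followP [y [/(@derives_terminal [::]) Ey ->]] <-.
by case: y Ey => [_|//]; rewrite take_size.
Qed.

Lemma U_size k p lam : U G k p lam -> size lam = k.
Proof.
elim=> [eta _|X alpha Y beta lam' g mu _ _ IH _ Hf]; first by rewrite size_nseq.
exact: follow_size Hf IH.
Qed.

Lemma U_lr0 k p lam : U G k p lam -> U G 0 p [::].
Proof.
elim=> [eta Hin|X alpha Y beta lam' g mu H1 _ IH H2 Hf]; first exact: U_start.
exact: U_step H1 IH H2 (follow_lr0 Hf).
Qed.

Lemma is_vertex_lr0 k v : is_vertex G k v -> is_vertex G 0 (v.1, [::]).
Proof. by case=> Hd HU; split => //; apply: U_lr0 HU. Qed.

Lemma reach_lr0 k v zeta : reach G k v zeta -> reach G 0 (v.1, [::]) zeta.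
Proof.
elim=> [eta Hin|v0 w z _ IH [Vv [Vw E]]|v0 tau w z _ IH [Vv [Vw E]]].
- exact: reach_start.
- apply: reach_eps IH _; split; first exact: is_vertex_lr0 Vv.
  split; first exact: is_vertex_lr0 Vw.
  case: E => [X [alpha [Y [beta [lam [g [mu [-> [-> Hf]]]]]]]]].
  by exists X, alpha, Y, beta, [::], g, [::]; split; last split; last exact: follow_lr0 Hf.
- apply: reach_sym IH _; split; first exact: is_vertex_lr0 Vv.
  split; first exact: is_vertex_lr0 Vw.
  case: E => [X [alpha [beta [lam [-> ->]]]]].
  by exists X, alpha, beta, [::].
Qed.

Lemma has_action_compatible k d lam mu a :
  has_action G k (d, lam) mu a -> compatible G k d mu lam.
Proof.
case=> [[_ HU] [[X [alpha [l [[-> <-] [-> _]]]]]|[X [alpha [s [beta [l [[-> ->] [Hf _]]]]]]]]] //.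
exact: follow_nil (U_size HU).
Qed.

Lemma compatible_has_action k d lam lam' mu a :
  has_action G k (d, lam) mu a -> U G k (under d) lam' ->
  compatible G k d mu lam' -> has_action G k (d, lam') mu a.
Proof.
move=> [[Hd _] act] HU Hc; split; first by split.
case: act => [[X [alpha [l [[Ed _] [_ ->]]]]]|[X [alpha [s [beta [l [[Ed _] [_ ->]]]]]]]];
  rewrite /compatible Ed in Hc *.
- by left; exists X, alpha, lam'; rewrite (follow_nilE Hc (U_size HU)).
- by right; exists X, alpha, s, beta, lam'.
Qed.

Lemma conflicting_sym k v1 v2 mu :
  conflicting G k v1 v2 mu -> conflicting G k v2 v1 mu.
Proof. by case=> [a1 [a2 [H1 [H2 Hne]]]]; exists a2, a1; split; last split; last apply/nesym. Qed.

Lemma conflict_pot_conflicting k d1 d2 l1 l2 zeta mu :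
  reach G k (d1, l1) zeta -> reach G k (d2, l2) zeta -> size mu = k ->
  conflicting G k (d1, l1) (d2, l2) mu -> pot_conflicting G k d1 mu.
Proof.
move=> R1 R2 Hmu conf; split => //.
have [_ [_ [[[_ U1] _] [[[_ U2] _] _]]]] := conf.
exists d2, l1, l2, zeta; split; first exact: U1.
split; first exact: U2.
split; first exact: reach_lr0 R1.
by split; first exact: reach_lr0 R2.
Qed.

Lemma has_action_lequiv k d lam lam' mu a :
  has_action G k (d, lam) mu a -> pot_conflicting G k d mu ->
  U G k (under d) lam' -> lequiv G k d lam' lam -> has_action G k (d, lam') mu a.
Proof.
move=> act pc HU eqv; apply: (compatible_has_action act HU).
exact/(eqv _ pc)/(has_action_compatible act).
Qed.

End LRConflicts.

Theorem mainTheorem12 (Lam : finType) (Sigma : Type) (G : grammar Lam Sigma)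
  (k : nat) (d1 d2 : dotted Lam Sigma) (l1 l2 : list (gamma Sigma))
  (zeta : list (sym Lam Sigma)) (mu : list (gamma Sigma)) :
  is_vertex G k (d1, l1) -> is_vertex G k (d2, l2) ->
  reach G k (d1, l1) zeta -> reach G k (d2, l2) zeta ->
  size mu = k ->
  conflicting G k (d1, l1) (d2, l2) mu ->
  forall l1', U G k (under d1) l1' -> lequiv G k d1 l1' l1 ->
  forall l2', U G k (under d2) l2' -> lequiv G k d2 l2' l2 ->
  conflicting G k (d1, l1') (d2, l2') mu.
Proof.
(* The vertex hypotheses are subsumed by [conflicting]. *)
move=> _ _ R1 R2 Hmu conf l1' U1 eqv1 l2' U2 eqv2.
have pc1 := conflict_pot_conflicting R1 R2 Hmu conf.
have pc2 := conflict_pot_conflicting R2 R1 Hmu (conflicting_sym conf).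
case: conf => [a1 [a2 [act1 [act2 Hne]]]].
exists a1, a2; split; first exact: has_action_lequiv act1 pc1 U1 eqv1.
by split; first exact: has_action_lequiv act2 pc2 U2 eqv2.
Qed.
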